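(* Let $d\geq 1$, $p>1$ and $m>0$, and let $f,g$ be real trigonometric polynomials on $\mathbb{T}^d=\mathbb{R}^d/(2\pi\mathbb{Z})^d$ with $g\not\equiv 0$. For $\nu=(\nu_1,\dots,\nu_d)\in[1,2]^d$ and $\epsilon\geq 0$ consider the equation $$-\Delta_\nu u-mu+\epsilon\big(f(x)u^p+g(x)\big)=0,\qquad x\in\mathbb{T}^d,\qquad (\ast)$$ where $\Delta_\nu:=-\sum_{i=1}^d\nu_i^2\frac{\partial^2}{\partial x_i^2}$. Then for every $\delta>0$ there exists $\epsilon_0>0$, depending only on $\delta,f,g,m,p,d$, such that for every $0\leq\epsilon\leq\epsilon_0$ there is a set $\Omega=\Omega(\epsilon)\subset[1,2]^d$ with Lebesgue measure $\mathrm{mes}([1,2]^d\setminus\Omega)\leq\delta$ such that for every $\nu\in\Omega$ there exists a real-analytic function $u_\nu\in C^\omega(\mathbb{T}^d,\mathbb{R})$ solving $(\ast)$.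
   Context: The equation $(\ast)$ is obtained by rescaling from $-\Delta u-mu+\epsilon(f u^p+g)=0$ on the rectangular torus $\prod_{i=1}^d(\mathbb{R}/2\pi\beta_i\mathbb{Z})$, $\beta\in[\tfrac12,1]^d$, via $\nu=(\beta_1^{-1},\dots,\beta_d^{-1})$; so the theorem equivalently gives analytic solutions on most rectangular tori. Note the sign convention: with the stated definition of $\Delta_\nu$, the operator $-\Delta_\nu$ acts on $e^{in\cdot x}$ as multiplication by $\sum_i\nu_i^2n_i^2$ (as in the Fourier formulation $(\sum_i\nu_i^2n_i^2-m)\hat u(n)+\epsilon(\widehat{fu^p}+\hat g)(n)=0$, $n\in\mathbb{Z}^d$). *)

From Stdlib Require Import Reals List ZArith.
Open Scope R_scope.

(* Points of R^d are represented as nat -> R; only coordinates i < d matter. *)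
Definition pt := nat -> R.

Fixpoint sum_upto (n : nat) (F : nat -> R) : R :=
  match n with O => 0 | S n' => sum_upto n' F + F n' end.

Fixpoint prod_upto (n : nat) (F : nat -> R) : R :=
  match n with O => 1 | S n' => prod_upto n' F * F n' end.

Definition dotZ (d : nat) (k : nat -> Z) (x : pt) : R :=
  sum_upto d (fun i => IZR (k i) * x i).

Definition trig_poly (d : nat) (l : list ((nat -> Z) * R * R)) (x : pt) : R :=
  fold_right (fun c acc => let '(k, a, b) := c in
                a * cos (dotZ d k x) + b * sin (dotZ d k x) + acc) 0 l.

Definition shift (x : pt) (i : nat) (t : R) : pt :=
  fun j => if Nat.eqb j i then x j + t else x j.

Definition torus_fun (d : nat) (u : pt -> R) : Prop :=
  (forall x y, (forall i, (i < d)%nat -> x i = y i) -> u x = u y) /\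
  (forall x i, (i < d)%nat -> u (shift x i (2 * PI)) = u x).

(* Du l = iterated partial derivative  d_{l_1} d_{l_2} ... d_{l_k} u
   (all iterated partials in directions i < d exist everywhere). *)
Definition partial_family (d : nat) (u : pt -> R) (Du : list nat -> pt -> R) : Prop :=
  (forall x, Du nil x = u x) /\
  (forall l i x, (i < d)%nat ->
     derivable_pt_lim (fun t => Du l (shift x i t)) 0 (Du (i :: l) x)).

(* Real-analyticity (C^omega) via local Cauchy estimates on all derivatives:
   u is C^infty and near every point |d^alpha u| <= C |alpha|! rho^{-|alpha|}. *)
Definition real_analytic (d : nat) (u : pt -> R) : Prop :=
  exists Du, partial_family d u Du /\
  forall x0 : pt, exists r C rho : R, 0 < r /\ 0 < C /\ 0 < rho /\
    forall (l : list nat) (x : pt), Forall (fun i => (i < d)%nat) l ->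
      (forall i, (i < d)%nat -> Rabs (x i - x0 i) < r) ->
      Rabs (Du l x) <= C * INR (fact (length l)) / rho ^ (length l).

(* u solves  -Delta_nu u - m u + eps (f u^p + g) = 0, where
   -Delta_nu u = - sum_i nu_i^2 d_i^2 u  (acts as sum nu_i^2 n_i^2 on e^{in.x}). *)
Definition solves (d : nat) (nu : pt) (m eps : R) (f g : pt -> R) (p : nat)
  (u : pt -> R) : Prop :=
  exists Du, partial_family d u Du /\
  forall x : pt,
    - sum_upto d (fun i => nu i ^ 2 * Du (i :: i :: nil) x) - m * u x
    + eps * (f x * u x ^ p + g x) = 0.

Definition box_vol (d : nat) (a b : pt) : R := prod_upto d (fun i => b i - a i).

Definition outer_measure_le (d : nat) (S : pt -> Prop) (delta : R) : Prop :=
  forall eta, 0 < eta ->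
  exists a b : nat -> pt,
    (forall k i, (i < d)%nat -> a k i <= b k i) /\
    (forall x, S x -> exists k, forall i, (i < d)%nat -> a k i <= x i <= b k i) /\
    (forall N, sum_f_R0 (fun k => box_vol d (a k) (b k)) N <= delta + eta).

Definition in_cube (d : nat) (nu : pt) : Prop :=
  forall i, (i < d)%nat -> 1 <= nu i <= 2.

From Stdlib Require Import Reals List ZArith Lra Lia Classical.
From Coquelicot Require Import Coquelicot.
Open Scope R_scope.

(* Trigonometric polynomials are handled formally, as finite lists of Fourier modes, and
   measured in the analytic norm |u| = sum_k |u_k| e^{|k|_1}.  This norm is submultiplicative
   and controls all derivatives, |d^l u| <= |l|! |u|.  If nu is non-resonant, i.e.
   |sum_i nu_i^2 k_i^2 - m| >= gam for all k in Z^d, then L = -Delta_nu - m is inverted mode by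
   mode with |L^-1| <= 1/gam, so for eps <= gam / (2 (|g| + p |f| + 1)) the Picard iteration
   u -> -eps L^-1 (f u^p + g) started at 0 has increments of norm <= 2^-(n+1); their sum
   converges with all derivatives to a real analytic solution.
   For nu in [1,2]^d only the finitely many k with |k_i| < m + 1 can be resonant, and for each
   of them the resonant nu lie in a slab of width O(gam) transversal to a direction i with
   k_i <> 0.  Hence the resonant set has measure O(gam) <= delta once gam is small. *)

Definition sum_list (l : list R) : R := fold_right Rplus 0 l.

Lemma sum_list_app l1 l2 : sum_list (l1 ++ l2) = sum_list l1 + sum_list l2.
Proof. induction l1; simpl; [ring | rewrite IHl1; ring]. Qed.

Lemma sum_list_nonneg l : (forall x, In x l -> 0 <= x) -> 0 <= sum_list l.
Proof.
  induction l as [|a l IH]; intros H; simpl; [lra|].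
  assert (0 <= a) by (apply H; left; auto).
  assert (0 <= sum_list l) by (apply IH; intros; apply H; right; auto). lra.
Qed.

Lemma sum_upto_ext n F G : (forall i, (i < n)%nat -> F i = G i) -> sum_upto n F = sum_upto n G.
Proof. induction n; intros H; simpl; auto. rewrite IHn, H; auto. Qed.

Lemma sum_upto_plus n F G : sum_upto n (fun i => F i + G i) = sum_upto n F + sum_upto n G.
Proof. induction n; simpl; [ring | rewrite IHn; ring]. Qed.

Lemma sum_upto_minus n F G : sum_upto n (fun i => F i - G i) = sum_upto n F - sum_upto n G.
Proof. induction n; simpl; [ring | rewrite IHn; ring]. Qed.

Lemma sum_upto_scal n c F : sum_upto n (fun i => c * F i) = c * sum_upto n F.
Proof. induction n; simpl; [ring | rewrite IHn; ring]. Qed.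

Lemma sum_upto_le n F G : (forall i, (i < n)%nat -> F i <= G i) -> sum_upto n F <= sum_upto n G.
Proof. induction n; intros H; simpl; [lra|]. apply Rplus_le_compat; auto. Qed.

Lemma sum_upto_abs_le n F G :
  (forall i, (i < n)%nat -> Rabs (F i) <= G i) -> Rabs (sum_upto n F) <= sum_upto n G.
Proof.
  induction n; intros H; simpl; [rewrite Rabs_R0; lra|].
  eapply Rle_trans; [apply Rabs_triang | apply Rplus_le_compat; auto].
Qed.

Lemma sum_upto_nonneg n F : (forall i, (i < n)%nat -> 0 <= F i) -> 0 <= sum_upto n F.
Proof.
  induction n; intros H; simpl; [lra|].
  assert (0 <= F n) by auto. assert (0 <= sum_upto n F) by auto. lra.
Qed.

Lemma sum_upto_single_le n F i :
  (i < n)%nat -> (forall j, (j < n)%nat -> 0 <= F j) -> F i <= sum_upto n F.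
Proof.
  induction n; intros Hi H; [lia|]. simpl.
  assert (0 <= sum_upto n F) by (apply sum_upto_nonneg; auto).
  destruct (Nat.eq_dec i n) as [->|Hne]; [lra|].
  assert (F i <= sum_upto n F) by (apply IHn; auto; lia). assert (0 <= F n) by auto. lra.
Qed.

Lemma sum_upto_split n F i0 : (i0 < n)%nat ->
  sum_upto n F = F i0 + sum_upto n (fun i => if Nat.eqb i i0 then 0 else F i).
Proof.
  induction n; intros H; [lia|]. simpl. destruct (Nat.eqb_spec n i0) as [->|Hne].
  - rewrite (sum_upto_ext _ (fun i => if Nat.eqb i i0 then 0 else F i) F); [ring|].
    intros i Hi. destruct (Nat.eqb_spec i i0); [lia | auto].
  - rewrite IHn by lia. ring.
Qed.

Lemma prod_upto_ext n F G : (forall i, (i < n)%nat -> F i = G i) -> prod_upto n F = prod_upto n G.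
Proof. induction n; intros H; simpl; auto. rewrite IHn, H; auto. Qed.

Lemma prod_upto_mult n F G : prod_upto n (fun i => F i * G i) = prod_upto n F * prod_upto n G.
Proof. induction n; simpl; [ring | rewrite IHn; ring]. Qed.

Lemma prod_upto_nonneg n F : (forall i, (i < n)%nat -> 0 <= F i) -> 0 <= prod_upto n F.
Proof. induction n; intros H; simpl; [lra|]. apply Rmult_le_pos; auto. Qed.

Lemma prod_upto_single n i0 v :
  (i0 < n)%nat -> prod_upto n (fun i => if Nat.eqb i i0 then v else 1) = v.
Proof.
  induction n; intros H; [lia|]. simpl. destruct (Nat.eqb_spec n i0) as [->|Hne].
  - assert (Hone : forall q, prod_upto q (fun _ => 1) = 1)
      by (induction q; simpl; [|rewrite IHq]; ring).
    rewrite (prod_upto_ext _ _ (fun _ => 1)), Hone; [ring|].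
    intros i Hi. destruct (Nat.eqb_spec i i0); [lia | auto].
  - rewrite IHn by lia. ring.
Qed.

Definition freq_add (k k' : nat -> Z) : nat -> Z := fun i => (k i + k' i)%Z.
Definition freq_opp (k : nat -> Z) : nat -> Z := fun i => (- k i)%Z.
Definition freq0 : nat -> Z := fun _ => 0%Z.

Lemma dotZ_add d k k' x : dotZ d (freq_add k k') x = dotZ d k x + dotZ d k' x.
Proof. unfold dotZ, freq_add. induction d; simpl; [ring|]. rewrite IHd, plus_IZR; ring. Qed.

Lemma dotZ_opp d k x : dotZ d (freq_opp k) x = - dotZ d k x.
Proof. unfold dotZ, freq_opp. induction d; simpl; [ring|]. rewrite IHd, opp_IZR; ring. Qed.

Lemma dotZ_freq0 d x : dotZ d freq0 x = 0.
Proof. unfold dotZ, freq0. induction d; simpl; [ring|]. rewrite IHd; ring. Qed.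

Lemma dotZ_ext d k x y : (forall i, (i < d)%nat -> x i = y i) -> dotZ d k x = dotZ d k y.
Proof. intros H. apply sum_upto_ext. intros i Hi; rewrite H; auto. Qed.

Lemma dotZ_shift d k x i t :
  (i < d)%nat -> dotZ d k (shift x i t) = dotZ d k x + IZR (k i) * t.
Proof.
  intros Hi. unfold dotZ.
  rewrite (sum_upto_split d _ i), (sum_upto_split d (fun j => IZR (k j) * x j) i) by assumption.
  unfold shift at 1. rewrite Nat.eqb_refl.
  rewrite (sum_upto_ext d _ (fun j => if Nat.eqb j i then 0 else IZR (k j) * x j)); [ring|].
  intros j _. unfold shift. destruct (Nat.eqb j i); reflexivity.
Qed.

(** * Formal Fourier polynomials *)

(* A mode (k, a, b) stands for (a + i b) e^{i k.x}; a list of modes for the sum of its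
   modes. *)
Definition mode := ((nat -> Z) * R * R)%type.

Definition mode_re d (x : pt) (t : mode) : R :=
  let '(k, a, b) := t in a * cos (dotZ d k x) - b * sin (dotZ d k x).
Definition mode_im d (x : pt) (t : mode) : R :=
  let '(k, a, b) := t in a * sin (dotZ d k x) + b * cos (dotZ d k x).

Definition fp_re d (A : list mode) x := sum_list (map (mode_re d x) A).
Definition fp_im d (A : list mode) x := sum_list (map (mode_im d x) A).

Lemma fp_re_cons d t A x : fp_re d (t :: A) x = mode_re d x t + fp_re d A x.
Proof. reflexivity. Qed.

Lemma fp_im_cons d t A x : fp_im d (t :: A) x = mode_im d x t + fp_im d A x.
Proof. reflexivity. Qed.

Lemma fp_re_app d A B x : fp_re d (A ++ B) x = fp_re d A x + fp_re d B x.
Proof. unfold fp_re. rewrite map_app, sum_list_app. reflexivity. Qed.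

Lemma fp_im_app d A B x : fp_im d (A ++ B) x = fp_im d A x + fp_im d B x.
Proof. unfold fp_im. rewrite map_app, sum_list_app. reflexivity. Qed.

Lemma fp_re_ext d A x y : (forall i, (i < d)%nat -> x i = y i) -> fp_re d A x = fp_re d A y.
Proof.
  intros H. induction A as [|[[k a] b] A IH]; auto.
  rewrite !fp_re_cons, IH. simpl. rewrite (dotZ_ext d k x y H). reflexivity.
Qed.

Definition mode_mul (s t : mode) : mode :=
  let '(k, a, b) := s in let '(k', a', b') := t in
  (freq_add k k', a * a' - b * b', a * b' + b * a').
Definition fp_mul (A B : list mode) : list mode := flat_map (fun s => map (mode_mul s) B) A.

Lemma mode_re_mul d x s t :
  mode_re d x (mode_mul s t) = mode_re d x s * mode_re d x t - mode_im d x s * mode_im d x t.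
Proof.
  destruct s as [[k a] b], t as [[k' a'] b']. simpl. rewrite dotZ_add, cos_plus, sin_plus. ring.
Qed.

Lemma mode_im_mul d x s t :
  mode_im d x (mode_mul s t) = mode_re d x s * mode_im d x t + mode_im d x s * mode_re d x t.
Proof.
  destruct s as [[k a] b], t as [[k' a'] b']. simpl. rewrite dotZ_add, cos_plus, sin_plus. ring.
Qed.

Lemma fp_re_im_mul d x A B :
  fp_re d (fp_mul A B) x = fp_re d A x * fp_re d B x - fp_im d A x * fp_im d B x /\
  fp_im d (fp_mul A B) x = fp_re d A x * fp_im d B x + fp_im d A x * fp_re d B x.
Proof.
  assert (Hmode : forall s,
    fp_re d (map (mode_mul s) B) x = mode_re d x s * fp_re d B x - mode_im d x s * fp_im d B x /\
    fp_im d (map (mode_mul s) B) x = mode_re d x s * fp_im d B x + mode_im d x s * fp_re d B x).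
  { intros s. induction B as [|t B [IHre IHim]]; [unfold fp_re, fp_im; simpl; split; ring|].
    simpl map. rewrite !fp_re_cons, !fp_im_cons, IHre, IHim, mode_re_mul, mode_im_mul.
    split; ring. }
  induction A as [|s A [IHre IHim]]; [unfold fp_re, fp_im; simpl; split; ring|].
  change (fp_mul (s :: A) B) with (map (mode_mul s) B ++ fp_mul A B).
  destruct (Hmode s) as [Hre Him].
  rewrite fp_re_app, fp_im_app, IHre, IHim, Hre, Him, !fp_re_cons, !fp_im_cons. split; ring.
Qed.

Lemma fp_re_mul d x A B :
  fp_re d (fp_mul A B) x = fp_re d A x * fp_re d B x - fp_im d A x * fp_im d B x.
Proof. apply fp_re_im_mul. Qed.

Lemma fp_im_mul d x A B :
  fp_im d (fp_mul A B) x = fp_re d A x * fp_im d B x + fp_im d A x * fp_re d B x.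
Proof. apply fp_re_im_mul. Qed.

Definition fp_one : list mode := (freq0, 1, 0) :: nil.

Lemma fp_re_one d x : fp_re d fp_one x = 1.
Proof. unfold fp_re, fp_one; simpl. rewrite dotZ_freq0, cos_0, sin_0. ring. Qed.

Lemma fp_im_one d x : fp_im d fp_one x = 0.
Proof. unfold fp_im, fp_one; simpl. rewrite dotZ_freq0, cos_0, sin_0. ring. Qed.

Fixpoint fp_pow (A : list mode) (n : nat) : list mode :=
  match n with O => fp_one | S n => fp_mul A (fp_pow A n) end.

Definition fp_scal (r : R) (A : list mode) : list mode :=
  map (fun t => let '(k, a, b) := t in (k, r * a, r * b)) A.

Lemma fp_re_scal d r A x : fp_re d (fp_scal r A) x = r * fp_re d A x.
Proof. induction A as [|[[k a] b] A IH]; unfold fp_re in *; simpl; [ring|]. rewrite IH; ring. Qed.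

Lemma fp_im_scal d r A x : fp_im d (fp_scal r A) x = r * fp_im d A x.
Proof. induction A as [|[[k a] b] A IH]; unfold fp_im in *; simpl; [ring|]. rewrite IH; ring. Qed.

Definition fp_conj (A : list mode) : list mode :=
  map (fun t => let '(k, a, b) := t in (freq_opp k, a, - b)) A.

Lemma fp_re_conj d A x : fp_re d (fp_conj A) x = fp_re d A x.
Proof.
  induction A as [|[[k a] b] A IH]; unfold fp_re in *; simpl; [ring|].
  rewrite IH, dotZ_opp, cos_neg, sin_neg; ring.
Qed.

Lemma fp_im_conj d A x : fp_im d (fp_conj A) x = - fp_im d A x.
Proof.
  induction A as [|[[k a] b] A IH]; unfold fp_im in *; simpl; [ring|].
  rewrite IH, dotZ_opp, cos_neg, sin_neg; ring.
Qed.

Definition fp_realpart (A : list mode) : list mode := fp_scal (1 / 2) (A ++ fp_conj A).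

Lemma fp_re_realpart d A x : fp_re d (fp_realpart A) x = fp_re d A x.
Proof. unfold fp_realpart. rewrite fp_re_scal, fp_re_app, fp_re_conj. field. Qed.

Lemma fp_im_realpart d A x : fp_im d (fp_realpart A) x = 0.
Proof. unfold fp_realpart. rewrite fp_im_scal, fp_im_app, fp_im_conj. field. Qed.

Definition fp_of_trig (l : list ((nat -> Z) * R * R)) : list mode :=
  map (fun t => let '(k, a, b) := t in (k, a, - b)) l.

Lemma fp_re_of_trig d l x : fp_re d (fp_of_trig l) x = trig_poly d l x.
Proof. induction l as [|[[k a] b] l IH]; unfold fp_re in *; simpl; [ring|]. rewrite IH; ring. Qed.

Lemma periodic_Z (f : R -> R) : (forall th n, f (th + 2 * INR n * PI) = f th) ->
  forall th z, f (th + IZR z * (2 * PI)) = f th.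
Proof.
  intros Hper th z. destruct z as [|q|q]; simpl; [rewrite Rmult_0_l, Rplus_0_r; auto | |].
  - rewrite <- positive_nat_Z, <- INR_IZR_INZ, <- (Hper th (Pos.to_nat q)). f_equal; ring.
  - rewrite <- Pos2Z.opp_pos, opp_IZR, <- positive_nat_Z, <- INR_IZR_INZ.
    rewrite <- (Hper (th + - INR (Pos.to_nat q) * (2 * PI)) (Pos.to_nat q)). f_equal; ring.
Qed.

Lemma fp_re_shift_2PI d A x i : (i < d)%nat -> fp_re d A (shift x i (2 * PI)) = fp_re d A x.
Proof.
  intros Hi. induction A as [|[[k a] b] A IH]; auto.
  rewrite !fp_re_cons, IH. simpl.
  rewrite dotZ_shift, (periodic_Z cos cos_period), (periodic_Z sin sin_period) by auto.
  reflexivity.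
Qed.

(** * The analytic norm *)

Definition freq_norm d (k : nat -> Z) := sum_upto d (fun i => Rabs (IZR (k i))).

Lemma freq_norm_nonneg d k : 0 <= freq_norm d k.
Proof. apply sum_upto_nonneg. intros; apply Rabs_pos. Qed.

Lemma freq_norm_add d k k' : freq_norm d (freq_add k k') <= freq_norm d k + freq_norm d k'.
Proof.
  unfold freq_norm. rewrite <- sum_upto_plus. apply sum_upto_le. intros i _.
  unfold freq_add. rewrite plus_IZR. apply Rabs_triang.
Qed.

Lemma freq_norm_opp d k : freq_norm d (freq_opp k) = freq_norm d k.
Proof. apply sum_upto_ext. intros i _. unfold freq_opp. rewrite opp_IZR, Rabs_Ropp. auto. Qed.

Lemma freq_norm_freq0 d : freq_norm d freq0 = 0.
Proof. unfold freq_norm, freq0. induction d; simpl; auto. rewrite IHd, Rabs_R0. ring. Qed.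

Lemma Rabs_freq_le_norm d k i : (i < d)%nat -> Rabs (IZR (k i)) <= freq_norm d k.
Proof.
  intros Hi. apply (sum_upto_single_le d (fun i => Rabs (IZR (k i)))); auto.
  intros; apply Rabs_pos.
Qed.

Definition mode_abs (t : mode) : R := let '(k, a, b) := t in Rabs a + Rabs b.
Definition mode_norm d (t : mode) : R :=
  let '(k, a, b) := t in (Rabs a + Rabs b) * exp (freq_norm d k).
Definition fp_l1 A := sum_list (map mode_abs A).
Definition fp_norm d A := sum_list (map (mode_norm d) A).

Lemma mode_abs_nonneg t : 0 <= mode_abs t.
Proof. destruct t as [[k a] b]; simpl. pose proof (Rabs_pos a); pose proof (Rabs_pos b); lra. Qed.

Lemma mode_norm_nonneg d t : 0 <= mode_norm d t.
Proof.
  destruct t as [[k a] b]; simpl. apply Rmult_le_pos; [apply (mode_abs_nonneg (k, a, b))|].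
  left; apply exp_pos.
Qed.

Lemma fp_norm_cons d t A : fp_norm d (t :: A) = mode_norm d t + fp_norm d A.
Proof. reflexivity. Qed.

Lemma fp_norm_app d A B : fp_norm d (A ++ B) = fp_norm d A + fp_norm d B.
Proof. unfold fp_norm. rewrite map_app, sum_list_app; auto. Qed.

Lemma fp_norm_nonneg d A : 0 <= fp_norm d A.
Proof.
  induction A as [|t A IH]; [unfold fp_norm; simpl; lra|].
  rewrite fp_norm_cons. pose proof (mode_norm_nonneg d t). lra.
Qed.

Lemma Rabs_cmul_le a b a' b' :
  Rabs (a * a' - b * b') + Rabs (a * b' + b * a') <= (Rabs a + Rabs b) * (Rabs a' + Rabs b').
Proof.
  pose proof (Rabs_triang (a * a') (- (b * b'))). pose proof (Rabs_triang (a * b') (b * a')).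
  rewrite Rabs_Ropp in H. rewrite !Rabs_mult in H, H0. unfold Rminus. nra.
Qed.

Lemma mode_norm_mul d s t : mode_norm d (mode_mul s t) <= mode_norm d s * mode_norm d t.
Proof.
  destruct s as [[k a] b], t as [[k' a'] b']. simpl.
  assert (Hexp : exp (freq_norm d (freq_add k k')) <= exp (freq_norm d k) * exp (freq_norm d k')).
  { rewrite <- exp_plus.
    destruct (Rle_lt_or_eq_dec _ _ (freq_norm_add d k k')) as [Hlt|Heq]; [|rewrite Heq; lra].
    left; apply exp_increasing, Hlt. }
  pose proof (Rabs_cmul_le a b a' b').
  pose proof (exp_pos (freq_norm d (freq_add k k'))).
  pose proof (mode_abs_nonneg (k, a, b)); pose proof (mode_abs_nonneg (k', a', b')); simpl in *.
  pose proof (Rabs_pos (a * a' - b * b')); pose proof (Rabs_pos (a * b' + b * a')).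
  apply Rle_trans
    with ((Rabs a + Rabs b) * (Rabs a' + Rabs b') * exp (freq_norm d (freq_add k k'))).
  - apply Rmult_le_compat_r; lra.
  - replace ((Rabs a + Rabs b) * exp (freq_norm d k) * ((Rabs a' + Rabs b') * exp (freq_norm d k')))
      with ((Rabs a + Rabs b) * (Rabs a' + Rabs b') * (exp (freq_norm d k) * exp (freq_norm d k')))
      by ring.
    apply Rmult_le_compat_l; [apply Rmult_le_pos|]; lra.
Qed.

Lemma fp_norm_mul d A B : fp_norm d (fp_mul A B) <= fp_norm d A * fp_norm d B.
Proof.
  assert (Hmode : forall s, fp_norm d (map (mode_mul s) B) <= mode_norm d s * fp_norm d B).
  { intros s. induction B as [|t B IH]; [unfold fp_norm; simpl; lra|].
    simpl map. rewrite !fp_norm_cons, Rmult_plus_distr_l.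
    apply Rplus_le_compat; [apply mode_norm_mul | exact IH]. }
  induction A as [|s A IH]; [unfold fp_norm; simpl; lra|].
  change (fp_mul (s :: A) B) with (map (mode_mul s) B ++ fp_mul A B).
  rewrite fp_norm_app, fp_norm_cons, Rmult_plus_distr_r.
  apply Rplus_le_compat; auto.
Qed.

Lemma fp_norm_one d : fp_norm d fp_one = 1.
Proof. unfold fp_norm, fp_one; simpl. rewrite freq_norm_freq0, exp_0, Rabs_R1, Rabs_R0. ring. Qed.

Lemma fp_norm_pow d A n : fp_norm d (fp_pow A n) <= fp_norm d A ^ n.
Proof.
  induction n; simpl; [rewrite fp_norm_one; lra|].
  pose proof (fp_norm_mul d A (fp_pow A n)). pose proof (fp_norm_nonneg d A). nra.
Qed.

Lemma fp_norm_scal d r A : fp_norm d (fp_scal r A) = Rabs r * fp_norm d A.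
Proof.
  induction A as [|[[k a] b] A IH]; unfold fp_norm in *; simpl; [ring|].
  rewrite IH, !Rabs_mult; ring.
Qed.

Lemma fp_norm_conj d A : fp_norm d (fp_conj A) = fp_norm d A.
Proof.
  induction A as [|[[k a] b] A IH]; unfold fp_norm in *; simpl; [ring|].
  rewrite IH, freq_norm_opp, Rabs_Ropp; ring.
Qed.

Lemma fp_norm_realpart d A : fp_norm d (fp_realpart A) = fp_norm d A.
Proof.
  unfold fp_realpart. rewrite fp_norm_scal, fp_norm_app, fp_norm_conj, Rabs_right by lra. field.
Qed.

Lemma Rabs_mode_re_le d x t : Rabs (mode_re d x t) <= mode_abs t.
Proof.
  destruct t as [[k a] b]; simpl. unfold Rminus.
  eapply Rle_trans; [apply Rabs_triang|]. rewrite Rabs_Ropp, !Rabs_mult.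
  assert (Rabs (cos (dotZ d k x)) <= 1) by (apply Rabs_le, COS_bound).
  assert (Rabs (sin (dotZ d k x)) <= 1) by (apply Rabs_le, SIN_bound).
  pose proof (Rabs_pos a); pose proof (Rabs_pos b).
  pose proof (Rabs_pos (cos (dotZ d k x))); pose proof (Rabs_pos (sin (dotZ d k x))). nra.
Qed.

Lemma Rabs_fp_re_le d x A : Rabs (fp_re d A x) <= fp_l1 A.
Proof.
  induction A as [|t A IH]; [unfold fp_re, fp_l1; simpl; rewrite Rabs_R0; lra|].
  rewrite fp_re_cons. unfold fp_l1; simpl; fold (fp_l1 A).
  eapply Rle_trans; [apply Rabs_triang|]. pose proof (Rabs_mode_re_le d x t). lra.
Qed.

(** * The operator -Delta_nu - m and derivatives *)

Definition helm_symbol d (nu : pt) (k : nat -> Z) := sum_upto d (fun i => nu i ^ 2 * IZR (k i) ^ 2).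

Definition fp_helm d nu m (A : list mode) : list mode :=
  map (fun t => let '(k, a, b) := t in
        (k, (helm_symbol d nu k - m) * a, (helm_symbol d nu k - m) * b)) A.
Definition fp_helm_inv d nu m (A : list mode) : list mode :=
  map (fun t => let '(k, a, b) := t in
        (k, a / (helm_symbol d nu k - m), b / (helm_symbol d nu k - m))) A.

Lemma helm_symbol_ext d nu k k' :
  (forall i, (i < d)%nat -> k i = k' i) -> helm_symbol d nu k = helm_symbol d nu k'.
Proof. intros H. apply sum_upto_ext. intros i Hi; rewrite H; auto. Qed.

Lemma helm_symbol_opp d nu k : helm_symbol d nu (freq_opp k) = helm_symbol d nu k.
Proof. apply sum_upto_ext. intros; unfold freq_opp; rewrite opp_IZR; ring. Qed.

Lemma fp_helm_app d nu m A B : fp_helm d nu m (A ++ B) = fp_helm d nu m A ++ fp_helm d nu m B.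
Proof. apply map_app. Qed.

Lemma fp_helm_inv_r d nu m A :
  (forall k, helm_symbol d nu k - m <> 0) -> fp_helm d nu m (fp_helm_inv d nu m A) = A.
Proof.
  intros H. induction A as [|[[k a] b] A IH]; simpl; auto.
  rewrite IH. repeat f_equal; field; auto.
Qed.

Lemma fp_helm_realpart_scal d nu m r A :
  fp_helm d nu m (fp_realpart (fp_scal r A)) = fp_realpart (fp_scal r (fp_helm d nu m A)).
Proof.
  unfold fp_realpart, fp_conj, fp_scal, fp_helm. rewrite !map_app, !map_map. f_equal.
  - apply map_ext. intros [[k a] b]. f_equal; [f_equal|]; ring.
  - apply map_ext. intros [[k a] b]. rewrite helm_symbol_opp. f_equal; [f_equal|]; ring.
Qed.

Lemma fp_norm_helm_inv d nu m A g : 0 < g -> (forall k, g <= Rabs (helm_symbol d nu k - m)) ->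
  fp_norm d (fp_helm_inv d nu m A) <= fp_norm d A / g.
Proof.
  intros Hg H. unfold Rdiv. induction A as [|[[k a] b] A IH]; [unfold fp_norm; simpl; lra|].
  simpl fp_helm_inv. rewrite !fp_norm_cons, Rmult_plus_distr_r.
  apply Rplus_le_compat; auto.
  specialize (H k). set (s := helm_symbol d nu k - m) in *.
  unfold mode_norm. unfold Rdiv. rewrite !Rabs_mult, !Rabs_inv.
  replace ((Rabs a * / Rabs s + Rabs b * / Rabs s) * exp (freq_norm d k))
    with ((Rabs a + Rabs b) * exp (freq_norm d k) * / Rabs s) by ring.
  apply Rmult_le_compat_l; [apply (mode_norm_nonneg d (k, a, b)) | apply Rinv_le_contravar; lra].
Qed.

(* Directions i >= d are not coordinates of the torus; sending them to 0 keeps the bound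
   |k_i| <= |k|_1 on the derivative factor unconditional. *)
Definition mode_deriv d i (t : mode) : mode :=
  let '(k, a, b) := t in
  if Nat.ltb i d then (k, - IZR (k i) * b, IZR (k i) * a) else (k, 0, 0).
Definition fp_deriv d i (A : list mode) : list mode := map (mode_deriv d i) A.
Definition mode_derivs d (l : list nat) (t : mode) : mode := fold_right (mode_deriv d) t l.
Definition fp_derivs d (l : list nat) (A : list mode) : list mode := map (mode_derivs d l) A.

Lemma fp_derivs_nil d A : fp_derivs d nil A = A.
Proof. apply map_id. Qed.

Lemma fp_derivs_cons d i l A : fp_derivs d (i :: l) A = fp_deriv d i (fp_derivs d l A).
Proof. unfold fp_derivs, fp_deriv. rewrite map_map. reflexivity. Qed.

Lemma is_derive_fp_re_shift d x i A t0 : (i < d)%nat ->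
  is_derive (fun t => fp_re d A (shift x i t)) t0 (fp_re d (fp_deriv d i A) (shift x i t0)).
Proof.
  intros Hi. induction A as [|[[k a] b] A IH].
  - apply (is_derive_const 0).
  - apply (is_derive_plus (fun t => mode_re d (shift x i t) (k, a, b))); auto.
    apply (is_derive_ext
      (fun t => a * cos (dotZ d k x + IZR (k i) * t) - b * sin (dotZ d k x + IZR (k i) * t))).
    { intros; unfold mode_re; rewrite dotZ_shift; auto. }
    unfold mode_deriv. apply Nat.ltb_lt in Hi. rewrite Hi. apply Nat.ltb_lt in Hi.
    unfold mode_re. rewrite dotZ_shift by auto.
    auto_derive; auto. ring.
Qed.

Lemma fp_re_helm d nu m A x : fp_re d (fp_helm d nu m A) x =
  - sum_upto d (fun i => nu i ^ 2 * fp_re d (fp_derivs d (i :: i :: nil) A) x) - m * fp_re d A x.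
Proof.
  induction A as [|[[k a] b] A IH].
  - unfold fp_re; simpl. rewrite (sum_upto_ext d _ (fun _ => 0 * 0)), sum_upto_scal; [ring|].
    intros; ring.
  - simpl fp_helm. rewrite !fp_re_cons.
    rewrite (sum_upto_ext d _ (fun i => - mode_re d x (k, a, b) * (nu i ^ 2 * IZR (k i) ^ 2) +
        nu i ^ 2 * fp_re d (fp_derivs d (i :: i :: nil) A) x)).
    + rewrite sum_upto_plus, sum_upto_scal, IH. unfold helm_symbol, mode_re. ring.
    + intros i Hi. apply Nat.ltb_lt in Hi.
      unfold fp_derivs at 1. cbn [map mode_derivs fold_right]. rewrite fp_re_cons.
      unfold mode_deriv. rewrite Hi. unfold mode_re.
      change (map (mode_derivs d (i :: i :: nil)) A) with (fp_derivs d (i :: i :: nil) A). ring.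
Qed.

Lemma pow_le_fact_exp n y : 0 <= y -> y ^ n <= INR (fact n) * exp y.
Proof.
  revert y. induction n; intros y Hy; [simpl; pose proof (exp_ineq1_le y); lra|].
  set (h := fun y => INR (fact (S n)) * exp y - y ^ S n).
  assert (Hd : forall c, derivable_pt_lim h c (INR (fact (S n)) * exp c - INR (S n) * c ^ n)).
  { intros c. apply derivable_pt_lim_minus.
    - apply derivable_pt_lim_scal, derivable_pt_lim_exp.
    - replace n with (Nat.pred (S n)) at 2 by auto. apply derivable_pt_lim_pow. }
  destruct (Req_dec y 0) as [->|Hy0].
  { simpl. rewrite exp_0, Rmult_0_l, Rmult_1_r. apply pos_INR. }
  (* h(0) = (n+1)! and h' >= 0 on [0, y] by induction *)
  destruct (MVT_cor2 h _ 0 y ltac:(lra) (fun c _ => Hd c)) as [c [Hc1 Hc2]].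
  assert (0 <= INR (fact (S n)) * exp c - INR (S n) * c ^ n).
  { change (fact (S n)) with (S n * fact n)%nat. rewrite mult_INR.
    pose proof (IHn c ltac:(lra)). pose proof (pos_INR (S n)). nra. }
  assert (h 0 = INR (fact (S n))) by (unfold h; simpl; rewrite exp_0; ring).
  assert (0 <= h y) by (pose proof (pos_INR (fact (S n))); nra).
  unfold h in *. lra.
Qed.

Lemma mode_derivs_bound d l t :
  fst (fst (mode_derivs d l t)) = fst (fst t) /\
  mode_abs (mode_derivs d l t) <= freq_norm d (fst (fst t)) ^ length l * mode_abs t.
Proof.
  destruct t as [[k a] b]. simpl fst.
  pose proof (freq_norm_nonneg d k) as Hk.
  induction l as [|i l [Hfreq IH]]; simpl; [split; auto; lra|].
  destruct (mode_derivs d l (k, a, b)) as [[k' a'] b']. simpl in Hfreq, IH |- *. subst k'.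
  destruct (Nat.ltb_spec i d); simpl; split; auto.
  - rewrite !Rabs_mult, Rabs_Ropp.
    pose proof (Rabs_freq_le_norm d k i H). pose proof (Rabs_pos a'). pose proof (Rabs_pos b').
    pose proof (Rabs_pos (IZR (k i))).
    apply Rle_trans with (freq_norm d k * (Rabs a' + Rabs b')); [nra|].
    rewrite Rmult_assoc. apply Rmult_le_compat_l; auto.
  - rewrite Rabs_R0, Rplus_0_l. apply Rmult_le_pos.
    + apply (pow_le _ (S (length l))), Hk.
    + apply (mode_abs_nonneg (k, a, b)).
Qed.

(* Cauchy estimate: the weight e^{|k|_1} pays for any number of derivatives. *)
Lemma Rabs_fp_re_derivs_le d x l A :
  Rabs (fp_re d (fp_derivs d l A) x) <= INR (fact (length l)) * fp_norm d A.
Proof.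
  eapply Rle_trans; [apply Rabs_fp_re_le|].
  induction A as [|t A IH]; [unfold fp_l1, fp_norm; simpl; lra|].
  unfold fp_derivs, fp_l1 in *; simpl. rewrite fp_norm_cons, Rmult_plus_distr_l.
  apply Rplus_le_compat; auto.
  destruct (mode_derivs_bound d l t) as [_ H]. eapply Rle_trans; [apply H|].
  destruct t as [[k a] b]; simpl.
  pose proof (pow_le_fact_exp (length l) (freq_norm d k) (freq_norm_nonneg d k)).
  pose proof (Rabs_pos a); pose proof (Rabs_pos b). nra.
Qed.

(** * The Picard iteration *)

Fixpoint pow_diff_quot (a b : R) (n : nat) : R :=
  match n with O => 0 | S n => a ^ n + b * pow_diff_quot a b n end.

Lemma pow_diff_quot_spec a b n : (a - b) * pow_diff_quot a b n = a ^ n - b ^ n.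
Proof.
  induction n; simpl; [ring|].
  replace ((a - b) * (a ^ n + b * pow_diff_quot a b n))
    with ((a - b) * a ^ n + b * ((a - b) * pow_diff_quot a b n)) by ring.
  rewrite IHn. ring.
Qed.

Fixpoint fp_pow_diff_quot (A B : list mode) (n : nat) : list mode :=
  match n with O => nil | S n => fp_pow A n ++ fp_mul B (fp_pow_diff_quot A B n) end.

Lemma fp_pow_real d x A n :
  fp_im d A x = 0 -> fp_re d (fp_pow A n) x = fp_re d A x ^ n /\ fp_im d (fp_pow A n) x = 0.
Proof.
  intros H. induction n as [|n [Hre Him]]; simpl; [split; [apply fp_re_one | apply fp_im_one]|].
  rewrite fp_re_mul, fp_im_mul, Hre, Him, H. split; ring.
Qed.

Lemma fp_pow_diff_quot_real d x A B n : fp_im d A x = 0 -> fp_im d B x = 0 ->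
  fp_re d (fp_pow_diff_quot A B n) x = pow_diff_quot (fp_re d A x) (fp_re d B x) n /\
  fp_im d (fp_pow_diff_quot A B n) x = 0.
Proof.
  intros HA HB. induction n as [|n [Hre Him]]; simpl; [unfold fp_re, fp_im; simpl; split; auto|].
  destruct (fp_pow_real d x A n HA) as [Hpre Hpim].
  rewrite fp_re_app, fp_im_app, fp_re_mul, fp_im_mul, Hre, Him, Hpre, Hpim, HB. split; ring.
Qed.

Lemma fp_norm_pow_diff_quot d A B n :
  fp_norm d A <= 1 -> fp_norm d B <= 1 -> fp_norm d (fp_pow_diff_quot A B n) <= INR n.
Proof.
  intros HA HB. induction n; [unfold fp_norm; simpl; lra|].
  simpl fp_pow_diff_quot. rewrite fp_norm_app, S_INR.
  pose proof (fp_norm_pow d A n). pose proof (fp_norm_mul d B (fp_pow_diff_quot A B n)).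
  pose proof (fp_norm_nonneg d A). pose proof (fp_norm_nonneg d B).
  pose proof (fp_norm_nonneg d (fp_pow_diff_quot A B n)).
  assert (fp_norm d A ^ n <= 1) by (rewrite <- (pow1 n); apply pow_incr; lra).
  nra.
Qed.

Section Picard.

Variables (d p : nat) (nu : pt) (m eps : R) (F G : list mode).

Let correction (A : list mode) := fp_realpart (fp_scal (- eps) (fp_helm_inv d nu m A)).

(* Pairs (U_n, W_n) with U_{n+1} = U_n + W_n and
   L W_{n+1} = -eps f (U_{n+1}^p - U_n^p), where L = -Delta_nu - m and the difference of
   powers is factored through [fp_pow_diff_quot], so that L U_{n+1} = -eps (g + f U_n^p).
   Taking real parts keeps every iterate real-valued, as needed to evaluate U^p. *)
Fixpoint picard (n : nat) : list mode * list mode :=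
  match n with
  | O => (nil, correction G)
  | S n => let (U, W) := picard n in
           (U ++ W, correction (fp_mul F (fp_mul W (fp_pow_diff_quot (U ++ W) U p))))
  end.

Definition picard_sum n := fst (picard n).
Definition picard_incr n := snd (picard n).

Lemma picard_sum_0 : picard_sum 0 = nil.
Proof. reflexivity. Qed.

Lemma picard_incr_0 : picard_incr 0 = correction G.
Proof. reflexivity. Qed.

Lemma picard_sum_S n : picard_sum (S n) = picard_sum n ++ picard_incr n.
Proof. unfold picard_sum, picard_incr. simpl. destruct (picard n). reflexivity. Qed.

Lemma picard_incr_S n : picard_incr (S n) =
  correction (fp_mul F (fp_mul (picard_incr n)
    (fp_pow_diff_quot (picard_sum (S n)) (picard_sum n) p))).
Proof.
  rewrite picard_sum_S. unfold picard_sum, picard_incr. simpl. destruct (picard n). reflexivity.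
Qed.

Lemma fp_im_picard_incr n x : fp_im d (picard_incr n) x = 0.
Proof. destruct n; [rewrite picard_incr_0 | rewrite picard_incr_S]; apply fp_im_realpart. Qed.

Lemma fp_im_picard_sum n x : fp_im d (picard_sum n) x = 0.
Proof.
  induction n; [reflexivity|]. rewrite picard_sum_S, fp_im_app, IHn, fp_im_picard_incr. ring.
Qed.

Lemma fp_re_picard_sum n x :
  fp_re d (picard_sum (S n)) x = sum_n (fun j => fp_re d (picard_incr j) x) n.
Proof.
  induction n; [rewrite sum_O, picard_sum_S, picard_sum_0; reflexivity|].
  rewrite sum_Sn, picard_sum_S, fp_re_app, IHn. reflexivity.
Qed.

Lemma sum_n_fp_re_helm_picard_incr x n :
  sum_n (fun j => fp_re d (fp_helm d nu m (picard_incr j)) x) n =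
  fp_re d (fp_helm d nu m (picard_sum (S n))) x.
Proof.
  induction n; [rewrite sum_O, picard_sum_S, picard_sum_0; reflexivity|].
  rewrite sum_Sn, IHn, (picard_sum_S (S n)), fp_helm_app, fp_re_app. reflexivity.
Qed.

Hypothesis nonresonant : forall k, helm_symbol d nu k - m <> 0.

Lemma fp_re_helm_correction A x :
  fp_re d (fp_helm d nu m (correction A)) x = - eps * fp_re d A x.
Proof.
  unfold correction. rewrite fp_helm_realpart_scal, fp_helm_inv_r by exact nonresonant.
  rewrite fp_re_realpart, fp_re_scal. reflexivity.
Qed.

Lemma fp_re_helm_picard_sum : (1 <= p)%nat -> forall n x,
  fp_re d (fp_helm d nu m (picard_sum (S n))) x =
  - eps * (fp_re d G x + fp_re d F x * fp_re d (picard_sum n) x ^ p).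
Proof.
  intros Hp n x. induction n.
  - rewrite picard_sum_S, picard_sum_0, picard_incr_0. simpl app.
    rewrite fp_re_helm_correction. change (fp_re d nil x) with 0. rewrite pow_i by lia. ring.
  - rewrite (picard_sum_S (S n)), fp_helm_app, fp_re_app, IHn, picard_incr_S, fp_re_helm_correction.
    rewrite !fp_re_mul, fp_im_mul, fp_im_picard_incr.
    destruct (fp_pow_diff_quot_real d x (picard_sum (S n)) (picard_sum n) p
      (fp_im_picard_sum _ x) (fp_im_picard_sum _ x)) as [-> ->].
    set (U1 := picard_sum (S n)). set (U0 := picard_sum n).
    assert (HW : fp_re d (picard_incr n) x = fp_re d U1 x - fp_re d U0 x)
      by (unfold U1, U0; rewrite picard_sum_S, fp_re_app; ring).
    pose proof (pow_diff_quot_spec (fp_re d U1 x) (fp_re d U0 x) p).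
    rewrite HW. nra.
Qed.

Variable gam : R.
Hypothesis gam_pos : 0 < gam.
Hypothesis gap : forall k, gam <= Rabs (helm_symbol d nu k - m).

Lemma fp_norm_correction A : gam * fp_norm d (correction A) <= Rabs eps * fp_norm d A.
Proof.
  unfold correction. rewrite fp_norm_realpart, fp_norm_scal, Rabs_Ropp.
  pose proof (fp_norm_helm_inv d nu m A gam gam_pos gap) as H.
  apply (Rmult_le_compat_l gam) in H; [|lra].
  replace (gam * (fp_norm d A / gam)) with (fp_norm d A) in H by (field; lra).
  pose proof (Rabs_pos eps). nra.
Qed.

Hypothesis small_G : Rabs eps * fp_norm d G <= gam / 2.
Hypothesis small_F : Rabs eps * fp_norm d F * INR p <= gam / 2.

Lemma fp_norm_picard n :
  fp_norm d (picard_incr n) <= (1 / 2) ^ S n /\ fp_norm d (picard_sum n) <= 1 - (1 / 2) ^ n.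
Proof.
  induction n as [|n [IHW IHU]].
  - rewrite picard_incr_0, picard_sum_0. split; [|unfold fp_norm; simpl; lra].
    pose proof (fp_norm_correction G). simpl. nra.
  - assert (IHU1 : fp_norm d (picard_sum (S n)) <= 1 - (1 / 2) ^ S n)
      by (rewrite picard_sum_S, fp_norm_app; simpl in *; lra).
    split; [|exact IHU1].
    set (W := picard_incr n) in *. set (U1 := picard_sum (S n)) in *. set (U0 := picard_sum n) in *.
    assert (Hhalf : 0 < (1 / 2) ^ n) by (apply pow_lt; lra).
    assert (HQ : fp_norm d (fp_pow_diff_quot U1 U0 p) <= INR p)
      by (apply fp_norm_pow_diff_quot; simpl in *; lra).
    assert (Hprod : fp_norm d (fp_mul F (fp_mul W (fp_pow_diff_quot U1 U0 p)))
                    <= fp_norm d F * INR p * (1 / 2) ^ S n).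
    { eapply Rle_trans; [apply fp_norm_mul|].
      rewrite Rmult_assoc. apply Rmult_le_compat_l; [apply fp_norm_nonneg|].
      eapply Rle_trans; [apply fp_norm_mul|]. rewrite Rmult_comm.
      apply Rmult_le_compat; auto using fp_norm_nonneg. }
    rewrite picard_incr_S. fold U1 U0 W.
    pose proof (fp_norm_correction (fp_mul F (fp_mul W (fp_pow_diff_quot U1 U0 p)))).
    assert (Rabs eps * fp_norm d (fp_mul F (fp_mul W (fp_pow_diff_quot U1 U0 p)))
            <= gam / 2 * (1 / 2) ^ S n).
    { apply Rle_trans with (Rabs eps * (fp_norm d F * INR p * (1 / 2) ^ S n)).
      - apply Rmult_le_compat_l; [apply Rabs_pos | exact Hprod].
      - rewrite <- Rmult_assoc, <- Rmult_assoc.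
        apply Rmult_le_compat_r; [simpl in *; lra | exact small_F]. }
    simpl in *. nra.
Qed.

End Picard.

(** * Termwise differentiation of series *)

Lemma ex_series_Rabs_le (a b : nat -> R) :
  (forall n, Rabs (a n) <= b n) -> ex_series b -> ex_series a.
Proof. intros H Hb. apply (ex_series_le a b); auto. Qed.

Lemma ex_series_geom_half c : ex_series (fun j => c * (1 / 2) ^ S j).
Proof.
  apply (ex_series_scal_l c (fun j => (1 / 2) ^ S j)).
  apply (ex_series_ext (fun j => (1 / 2) * (1 / 2) ^ j)); [reflexivity|].
  apply (ex_series_scal_l (1 / 2) (fun j => (1 / 2) ^ j)), ex_series_geom.
  rewrite Rabs_right; lra.
Qed.

Lemma Series_geom_half c : Series (fun j => c * (1 / 2) ^ S j) = c.
Proof.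
  rewrite Series_scal_l, (Series_ext _ (fun j => (1 / 2) * (1 / 2) ^ j)) by reflexivity.
  rewrite Series_scal_l, Series_geom by (rewrite Rabs_right; lra). field.
Qed.

Lemma Rabs_diff_le_of_derive f f' h B : (forall t, is_derive f t (f' t)) ->
  (forall t, Rabs t <= Rabs h -> Rabs (f' t) <= B) -> Rabs (f h - f 0) <= B * Rabs h.
Proof.
  intros Hd Hb.
  assert (Hd' : forall c, derivable_pt_lim f c (f' c)) by (intros c; apply is_derive_Reals, Hd).
  destruct (Rtotal_order h 0) as [Hn|[->|Hp]].
  - destruct (MVT_cor2 f f' h 0 Hn (fun c _ => Hd' c)) as [c [Hc1 Hc2]].
    rewrite <- Rabs_Ropp. replace (- (f h - f 0)) with (f 0 - f h) by ring.
    rewrite Hc1, Rabs_mult, (Rabs_right (0 - h)), (Rabs_left h) by lra.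
    replace (0 - h) with (- h) by ring. apply Rmult_le_compat_r; [lra|].
    apply Hb. rewrite (Rabs_left h), Rabs_left1 by lra. lra.
  - replace (f 0 - f 0) with 0 by ring. rewrite !Rabs_R0. lra.
  - destruct (MVT_cor2 f f' 0 h Hp (fun c _ => Hd' c)) as [c [Hc1 Hc2]].
    rewrite Hc1, Rabs_mult. replace (h - 0) with h by ring.
    apply Rmult_le_compat_r; [apply Rabs_pos|]. apply Hb. rewrite !Rabs_right; lra.
Qed.

Lemma taylor1_remainder_le f f1 f2 M h :
  (forall t, is_derive f t (f1 t)) -> (forall t, is_derive f1 t (f2 t)) ->
  (forall t, Rabs (f2 t) <= M) -> Rabs (f h - f 0 - h * f1 0) <= M * (h * h).
Proof.
  intros H1 H2 H3.
  replace (f h - f 0 - h * f1 0) with ((f h - h * f1 0) - (f 0 - 0 * f1 0)) by ring.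
  replace (M * (h * h)) with (M * Rabs h * Rabs h)
    by (rewrite Rmult_assoc, <- Rabs_mult, Rabs_right by (apply Rle_ge, Rle_0_sqr); reflexivity).
  apply (Rabs_diff_le_of_derive (fun t => f t - t * f1 0) (fun t => f1 t - f1 0)).
  - intros t. apply is_derive_Reals.
    replace (f1 t - f1 0) with (f1 t - (1 * f1 0 + t * 0)) by ring.
    apply (derivable_pt_lim_minus f (fun t => t * f1 0)); [apply is_derive_Reals, H1|].
    apply (derivable_pt_lim_mult id (fct_cte (f1 0)));
      [apply derivable_pt_lim_id | apply derivable_pt_lim_const].
  - intros t Ht. eapply Rle_trans; [apply (Rabs_diff_le_of_derive f1 f2 t M H2 (fun s _ => H3 s))|].
    apply Rmult_le_compat_l; auto. eapply Rle_trans; [apply Rabs_pos | apply (H3 0)].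
Qed.

(* Summable second derivatives give a uniform O(h^2) bound on the Taylor remainders. *)
Lemma is_derive_Series (g g1 g2 : nat -> R -> R) (M : nat -> R) :
  (forall j t, is_derive (g j) t (g1 j t)) -> (forall j t, is_derive (g1 j) t (g2 j t)) ->
  (forall j t, Rabs (g2 j t) <= M j) -> ex_series M ->
  (forall t, ex_series (fun j => g j t)) -> ex_series (fun j => g1 j 0) ->
  is_derive (fun t => Series (fun j => g j t)) 0 (Series (fun j => g1 j 0)).
Proof.
  intros Hd1 Hd2 HM Hs Hg Hg1. apply is_derive_Reals. intros e He.
  assert (HM0 : forall j, 0 <= M j)
    by (intros j; eapply Rle_trans; [apply Rabs_pos | apply (HM j 0)]).
  set (S := Series M).
  assert (HS : 0 <= S).
  { unfold S. replace 0 with (Series (fun j => 0 * M j)) by (rewrite Series_scal_l; ring).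
    apply Series_le; auto. intros n; rewrite Rmult_0_l; split; [lra | auto]. }
  assert (Hd : 0 < e / (S + 1)) by (apply Rdiv_lt_0_compat; lra).
  exists (mkposreal _ Hd). intros h Hh0 Hh. simpl in Hh. rewrite Rplus_0_l.
  assert (Htaylor : forall j, Rabs (g j h - g j 0 - h * g1 j 0) <= M j * (h * h))
    by (intros j; apply (taylor1_remainder_le (g j) (g1 j) (g2 j)); auto).
  assert (Hrem : ex_series (fun j => g j h - g j 0 - h * g1 j 0)).
  { apply (ex_series_Rabs_le _ _ Htaylor). apply (ex_series_scal_r (h * h) M Hs). }
  assert (Eq : (Series (fun j => g j h) - Series (fun j => g j 0)) / h - Series (fun j => g1 j 0)
               = Series (fun j => g j h - g j 0 - h * g1 j 0) / h).
  { rewrite Series_minus, Series_minus, Series_scal_l; auto.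
    - field; auto.
    - apply (ex_series_minus (fun j => g j h) (fun j => g j 0)); auto.
    - apply (ex_series_scal_l h (fun j => g1 j 0)); auto. }
  rewrite Eq. unfold Rdiv. rewrite Rabs_mult, Rabs_inv.
  assert (Hb : Rabs (Series (fun j => g j h - g j 0 - h * g1 j 0)) <= S * (h * h)).
  { eapply Rle_trans; [apply Series_Rabs|].
    - apply (ex_series_Rabs_le _ (fun j => M j * (h * h))).
      + intros j. rewrite Rabs_Rabsolu. apply Htaylor.
      + apply (ex_series_scal_r (h * h) M Hs).
    - unfold S. rewrite <- Series_scal_r. apply Series_le; [|apply (ex_series_scal_r (h * h) M Hs)].
      intros j. split; [apply Rabs_pos | apply Htaylor]. }
  assert (Hh1 : 0 < Rabs h) by (apply Rabs_pos_lt; auto).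
  apply Rle_lt_trans with (S * Rabs h).
  - replace (S * Rabs h) with (S * (h * h) * / Rabs h).
    + apply Rmult_le_compat_r; auto. left; apply Rinv_0_lt_compat; auto.
    + rewrite <- (Rabs_right (h * h)) by (apply Rle_ge, Rle_0_sqr). rewrite Rabs_mult. field. lra.
  - apply Rle_lt_trans with (S * (e / (S + 1))); [apply Rmult_le_compat_l; lra|].
    apply Rlt_le_trans with ((S + 1) * (e / (S + 1))); [apply Rmult_lt_compat_r; lra|].
    right; field; lra.
Qed.

Lemma is_series_sum_upto n (c : nat -> R) (b : nat -> nat -> R) (s : nat -> R) :
  (forall i, (i < n)%nat -> is_series (b i) (s i)) ->
  is_series (fun j => sum_upto n (fun i => c i * b i j)) (sum_upto n (fun i => c i * s i)).
Proof.
  induction n; intros H; simpl.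
  - pose proof (is_series_scal_l 0 _ _ (Series_correct _ (ex_series_geom_half 1))) as H0.
    apply (is_series_ext _ _ _ (fun j => Rmult_0_l _)) in H0.
    change (scal 0 ?s) with (0 * s) in H0. rewrite Rmult_0_l in H0. exact H0.
  - apply (is_series_plus _ (fun j => c n * b n j)); [apply IHn; auto|].
    apply (is_series_scal_l (c n) (b n)). apply H. lia.
Qed.

Section SeriesOfModes.

Variables (d : nat) (W : nat -> list mode).
Hypothesis W_small : forall j, fp_norm d (W j) <= (1 / 2) ^ S j.

Definition fp_series_derivs (l : list nat) (y : pt) : R :=
  Series (fun j => fp_re d (fp_derivs d l (W j)) y).

Lemma Rabs_fp_re_derivs_series_le l y j :
  Rabs (fp_re d (fp_derivs d l (W j)) y) <= INR (fact (length l)) * (1 / 2) ^ S j.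
Proof.
  eapply Rle_trans; [apply Rabs_fp_re_derivs_le|].
  apply Rmult_le_compat_l; [apply pos_INR | apply W_small].
Qed.

Lemma ex_series_fp_re_derivs l y : ex_series (fun j => fp_re d (fp_derivs d l (W j)) y).
Proof.
  apply (ex_series_Rabs_le _ _ (Rabs_fp_re_derivs_series_le l y)), ex_series_geom_half.
Qed.

Lemma fp_series_partial_family : partial_family d (fp_series_derivs nil) fp_series_derivs.
Proof.
  split; [reflexivity|]. intros l i x Hi. apply is_derive_Reals.
  replace (fp_series_derivs (i :: l) x)
    with (Series (fun j => fp_re d (fp_derivs d (i :: l) (W j)) (shift x i 0))).
  2:{ apply Series_ext. intros j. apply fp_re_ext. intros q _. unfold shift.
      destruct (Nat.eqb q i); ring. }
  apply (is_derive_Series (fun j t => fp_re d (fp_derivs d l (W j)) (shift x i t))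
           (fun j t => fp_re d (fp_derivs d (i :: l) (W j)) (shift x i t))
           (fun j t => fp_re d (fp_derivs d (i :: i :: l) (W j)) (shift x i t))
           (fun j => INR (fact (length (i :: i :: l))) * (1 / 2) ^ S j)).
  - intros j t. rewrite fp_derivs_cons. apply is_derive_fp_re_shift, Hi.
  - intros j t. rewrite (fp_derivs_cons d i (i :: l)). apply is_derive_fp_re_shift, Hi.
  - intros j t. apply Rabs_fp_re_derivs_series_le.
  - apply ex_series_geom_half.
  - intros t. apply ex_series_fp_re_derivs.
  - apply ex_series_fp_re_derivs.
Qed.

Lemma fp_series_torus_fun : torus_fun d (fp_series_derivs nil).
Proof.
  split.
  - intros x y Hxy. apply Series_ext. intros j. apply fp_re_ext; auto.
  - intros x i Hi. apply Series_ext. intros j. apply fp_re_shift_2PI; auto.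
Qed.

Lemma fp_series_real_analytic : real_analytic d (fp_series_derivs nil).
Proof.
  exists fp_series_derivs. split; [exact fp_series_partial_family|].
  intros x0. exists 1, 1, 1. do 3 (split; [lra|]).
  intros l x _ _. rewrite pow1, Rmult_1_l, Rdiv_1_r.
  rewrite <- (Series_geom_half (INR (fact (length l)))).
  eapply Rle_trans; [apply Series_Rabs|].
  - apply (ex_series_Rabs_le _ _ (fun j => Rle_trans _ _ _ (Req_le _ _ (Rabs_Rabsolu _))
                                            (Rabs_fp_re_derivs_series_le l x j))).
    apply ex_series_geom_half.
  - apply Series_le; [|apply ex_series_geom_half].
    intros j; split; [apply Rabs_pos | apply Rabs_fp_re_derivs_series_le].
Qed.

Lemma is_series_fp_re_helm nu m x :
  is_series (fun j => fp_re d (fp_helm d nu m (W j)) x)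
    (- sum_upto d (fun i => nu i ^ 2 * fp_series_derivs (i :: i :: nil) x)
     - m * fp_series_derivs nil x).
Proof.
  assert (E : forall j,
      (-1) * sum_upto d (fun i => nu i ^ 2 * fp_re d (fp_derivs d (i :: i :: nil) (W j)) x)
      + (- m) * fp_re d (fp_derivs d nil (W j)) x = fp_re d (fp_helm d nu m (W j)) x)
    by (intros j; rewrite fp_re_helm, fp_derivs_nil; ring).
  apply (is_series_ext _ _ _ E).
  assert (E' : forall s u : R, - s - m * u = plus (scal (-1) s) (scal (- m) u))
    by (intros s u; change plus with Rplus; change scal with Rmult; ring).
  pose proof (is_series_sum_upto d (fun i => nu i ^ 2)
    (fun i j => fp_re d (fp_derivs d (i :: i :: nil) (W j)) x)
    (fun i => fp_series_derivs (i :: i :: nil) x)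
    (fun i _ => Series_correct _ (ex_series_fp_re_derivs _ x))) as Hsum.
  pose proof (Series_correct _ (ex_series_fp_re_derivs nil x)) as Hu.
  pose proof (is_series_plus _ _ _ _ (is_series_scal_l (-1) _ _ Hsum)
                                     (is_series_scal_l (- m) _ _ Hu)) as H.
  rewrite E'. exact H.
Qed.

End SeriesOfModes.

Lemma nonresonant_solution d p nu m eps gam lf lg :
  (1 <= p)%nat -> 0 < gam -> (forall k, gam <= Rabs (helm_symbol d nu k - m)) ->
  Rabs eps * fp_norm d (fp_of_trig lg) <= gam / 2 ->
  Rabs eps * fp_norm d (fp_of_trig lf) * INR p <= gam / 2 ->
  exists u, torus_fun d u /\ real_analytic d u /\
    solves d nu m eps (trig_poly d lf) (trig_poly d lg) p u.
Proof.
  intros Hp Hg Hgap HG HF.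
  set (F := fp_of_trig lf). set (G := fp_of_trig lg).
  set (U := picard_sum d p nu m eps F G). set (W := picard_incr d p nu m eps F G).
  assert (HW : forall j, fp_norm d (W j) <= (1 / 2) ^ S j)
    by (intros j; apply (fp_norm_picard d p nu m eps F G gam); auto).
  assert (Hnr : forall k, helm_symbol d nu k - m <> 0).
  { intros k E. specialize (Hgap k). rewrite E, Rabs_R0 in Hgap. lra. }
  set (u := fp_series_derivs d W nil).
  exists u. split; [apply fp_series_torus_fun|]. split; [apply fp_series_real_analytic; auto|].
  exists (fp_series_derivs d W). split; [apply fp_series_partial_family; auto|]. intros x.
  (* both sides of the equation are limits of fp_re (L U_{n+1}) x *)
  set (nonlin := fun y => - eps * (fp_re d G x + fp_re d F x * y ^ p)).
  assert (HU : is_lim_seq (fun n => fp_re d (U n) x) (u x)).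
  { apply is_lim_seq_incr_1.
    apply (is_lim_seq_ext (sum_n (fun j => fp_re d (fp_derivs d nil (W j)) x))).
    - intros n. unfold U. rewrite fp_re_picard_sum.
      apply sum_n_ext. intros j. rewrite fp_derivs_nil. reflexivity.
    - exact (Series_correct _ (ex_series_fp_re_derivs d W HW nil x)). }
  assert (Hlhs : is_lim_seq (sum_n (fun j => fp_re d (fp_helm d nu m (W j)) x))
    (- sum_upto d (fun i => nu i ^ 2 * fp_series_derivs d W (i :: i :: nil) x) - m * u x))
    by (apply is_series_fp_re_helm; auto).
  assert (Hrhs : is_lim_seq (fun n => nonlin (fp_re d (U n) x)) (nonlin (u x)))
    by (apply is_lim_seq_continuous; [unfold nonlin; reg | exact HU]).
  apply (is_lim_seq_ext _ (fun n => nonlin (fp_re d (U n) x))) in Hlhs.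
  2:{ intros n. unfold W, U. rewrite sum_n_fp_re_helm_picard_incr.
      apply fp_re_helm_picard_sum; auto. }
  pose proof (is_lim_seq_unique _ _ Hlhs) as E1. rewrite (is_lim_seq_unique _ _ Hrhs) in E1.
  apply Rbar_finite_eq in E1. unfold nonlin in E1.
  rewrite <- (fp_re_of_trig d lf x), <- (fp_re_of_trig d lg x). fold F G. lra.
Qed.

(** * Measure of the resonant set *)

Definition box := (pt * pt)%type.
Definition box_wf d (bx : box) := forall i, (i < d)%nat -> fst bx i <= snd bx i.
Definition in_box d (bx : box) (nu : pt) := forall i, (i < d)%nat -> fst bx i <= nu i <= snd bx i.
Definition box_volume d (bx : box) := box_vol d (fst bx) (snd bx).

Definition box_covered d (S : pt -> Prop) (V : R) : Prop :=
  exists Lb : list box,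
    (forall bx, In bx Lb -> box_wf d bx) /\
    (forall nu, S nu -> exists bx, In bx Lb /\ in_box d bx nu) /\
    sum_list (map (box_volume d) Lb) <= V.

Lemma box_volume_nonneg d bx : box_wf d bx -> 0 <= box_volume d bx.
Proof. intros H. apply prod_upto_nonneg. intros i Hi. specialize (H i Hi). lra. Qed.

Lemma box_covered_empty d (S : pt -> Prop) : (forall nu, ~ S nu) -> box_covered d S 0.
Proof.
  intros H. exists nil. split; [intros bx []|]. split; [|simpl; lra].
  intros nu Hnu. exfalso; exact (H nu Hnu).
Qed.

Lemma box_covered_single d (S : pt -> Prop) bx :
  box_wf d bx -> (forall nu, S nu -> in_box d bx nu) -> box_covered d S (box_volume d bx).
Proof.
  intros Hwf H. exists (bx :: nil). split; [intros b [<-|[]]; exact Hwf|].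
  split; [intros nu Hnu; exists bx; split; [left|]; auto | simpl; lra].
Qed.

Lemma box_covered_weaken d (S S' : pt -> Prop) V V' :
  (forall nu, S nu -> S' nu) -> box_covered d S' V -> V <= V' -> box_covered d S V'.
Proof.
  intros HS [Lb [Hwf [Hcov Hvol]]] HV. exists Lb. split; [exact Hwf|].
  split; [intros nu Hnu; apply Hcov, HS, Hnu | lra].
Qed.

Lemma box_covered_union d (S1 S2 : pt -> Prop) V1 V2 :
  box_covered d S1 V1 -> box_covered d S2 V2 -> box_covered d (fun nu => S1 nu \/ S2 nu) (V1 + V2).
Proof.
  intros [L1 [Hwf1 [Hcov1 Hvol1]]] [L2 [Hwf2 [Hcov2 Hvol2]]]. exists (L1 ++ L2). split; [|split].
  - intros bx Hbx. apply in_app_or in Hbx as [Hbx|Hbx]; auto.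
  - intros nu [Hnu|Hnu];
      [destruct (Hcov1 nu Hnu) as [bx [Hin Hbx]] | destruct (Hcov2 nu Hnu) as [bx [Hin Hbx]]];
      exists bx; split; auto; apply in_or_app; auto.
  - rewrite map_app, sum_list_app. lra.
Qed.

Lemma box_covered_list_union {A} d (l : list A) (S : A -> pt -> Prop) V :
  (forall a, In a l -> box_covered d (S a) V) ->
  box_covered d (fun nu => exists a, In a l /\ S a nu) (INR (length l) * V).
Proof.
  induction l as [|a l IH]; intros H.
  - apply (box_covered_weaken _ _ (fun _ => False) 0 _); [intros nu [a [[] _]] | | simpl; lra].
    apply box_covered_empty. auto.
  - apply (box_covered_weaken _ _ (fun nu => S a nu \/ exists a', In a' l /\ S a' nu)
                               (V + INR (length l) * V)).
    + intros nu [a' [[<-|Hin] Hnu]]; [left | right; exists a']; auto.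
    + apply box_covered_union; [apply H; left; auto | apply IH; intros; apply H; right; auto].
    + simpl length. rewrite S_INR. lra.
Qed.

Lemma outer_measure_le_of_box_covered d (S : pt -> Prop) delta :
  (1 <= d)%nat -> box_covered d S delta -> outer_measure_le d S delta.
Proof.
  intros Hd [Lb [Hwf [Hcov Hvol]]] eta Heta.
  (* pad the finite cover with degenerate boxes, of volume 0 since d >= 1 *)
  set (z := ((fun _ : nat => 0), (fun _ : nat => 0)) : box).
  assert (Hz : box_volume d z = 0).
  { unfold box_volume, box_vol, z; simpl. destruct d; [lia|]. simpl. ring. }
  exists (fun n => fst (nth n Lb z)), (fun n => snd (nth n Lb z)). split; [|split].
  - intros n i Hi. destruct (Nat.lt_ge_cases n (length Lb)).
    + apply Hwf; auto. apply nth_In; auto.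
    + rewrite nth_overflow by auto. simpl; lra.
  - intros nu Hnu. destruct (Hcov nu Hnu) as [bx [Hin Hbx]].
    apply In_nth with (d := z) in Hin as [n [_ Hn]]. exists n. rewrite Hn. auto.
  - intros N.
    enough (sum_f_R0 (fun n => box_volume d (nth n Lb z)) N <= sum_list (map (box_volume d) Lb))
      by (unfold box_volume in *; lra).
    clear Hcov Hvol. revert N. induction Lb as [|b Lb IH]; intros N.
    + simpl. rewrite (sum_eq _ (fun _ => 0)), sum_cte; [lra|]. intros [|i] _; exact Hz.
    + assert (0 <= sum_list (map (box_volume d) Lb)).
      { apply sum_list_nonneg. intros x Hx. apply in_map_iff in Hx as [bx [<- Hbx]].
        apply box_volume_nonneg, Hwf; right; auto. }
      simpl. destruct N as [|N]; [simpl; lra|].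
      rewrite decomp_sum by lia. simpl. apply Rplus_le_compat_l, IH. intros; apply Hwf; right; auto.
Qed.

(* [grid r n] enumerates the multi-indices c with c i < r i for i < n (and c i = 0 beyond). *)
Fixpoint grid (r : nat -> nat) (n : nat) : list (nat -> nat) :=
  match n with
  | O => (fun _ => 0%nat) :: nil
  | S n => flat_map (fun c => map (fun j => fun i => if Nat.eqb i n then j else c i) (seq 0 (r n)))
                    (grid r n)
  end.

Lemma length_grid r n : INR (length (grid r n)) = prod_upto n (fun i => INR (r i)).
Proof.
  induction n; simpl; auto. rewrite <- IHn.
  assert (Hlen : forall l : list (nat -> nat), length (flat_map (fun c =>
      map (fun j => fun i => if Nat.eqb i n then j else c i) (seq 0 (r n))) l)
      = (length l * r n)%nat).
  { induction l; simpl; auto. rewrite length_app, length_map, length_seq, IHl. lia. }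
  rewrite Hlen, mult_INR. reflexivity.
Qed.

Lemma in_grid r n c : (forall i, (i < n)%nat -> (c i < r i)%nat) ->
  exists c', In c' (grid r n) /\ forall i, (i < n)%nat -> c' i = c i.
Proof.
  induction n; intros H; [exists (fun _ => 0%nat); split; [left; auto | intros; lia]|].
  destruct IHn as [c' [Hin Heq]]; [intros; apply H; lia|].
  exists (fun i => if Nat.eqb i n then c n else c' i). split.
  - simpl. apply in_flat_map. exists c'. split; auto. apply in_map_iff. exists (c n). split; auto.
    apply in_seq. specialize (H n). lia.
  - intros i Hi. destruct (Nat.eqb_spec i n) as [->|]; auto. apply Heq; lia.
Qed.

Definition resonant d m gam (k : nat -> Z) (nu : pt) :=
  in_cube d nu /\ Rabs (helm_symbol d nu k - m) < gam.

Lemma nat_above x : exists n : nat, x < INR n.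
Proof.
  destruct (archimed x) as [H1 _]. exists (Z.to_nat (up x)).
  destruct (Z_le_gt_dec (up x) 0) as [H|H].
  - replace (Z.to_nat (up x)) with 0%nat by lia. simpl. apply IZR_le in H. lra.
  - rewrite INR_IZR_INZ, Z2Nat.id by lia. auto.
Qed.

Lemma finite_choice (P : nat -> nat -> Prop) n : (forall i, (i < n)%nat -> exists x, P i x) ->
  exists f : nat -> nat, forall i, (i < n)%nat -> P i (f i).
Proof.
  induction n; intros H; [exists (fun _ => 0%nat); intros; lia|].
  destruct IHn as [f Hf]; [intros; apply H; lia|]. destruct (H n) as [x Hx]; [lia|].
  exists (fun i => if Nat.eqb i n then x else f i). intros i Hi.
  destruct (Nat.eqb_spec i n) as [->|]; auto. apply Hf; lia.
Qed.

Lemma floor_in_range N t :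
  0 <= t <= INR (S N) -> exists c, (c < S N)%nat /\ INR c <= t <= INR c + 1.
Proof.
  induction N; intros H; [exists 0%nat; simpl in *; split; [lia | lra]|].
  destruct (Rle_dec t (INR (S N))) as [Ht|Ht].
  - destruct IHN as [c [H1 H2]]; [lra|]. exists c; split; auto; lia.
  - exists (S N). split; [lia|]. rewrite (S_INR (S N)) in H. lra.
Qed.

Lemma IZR_sqr_ge_1 z : z <> 0%Z -> 1 <= IZR z ^ 2.
Proof.
  intros H. replace (IZR z ^ 2) with (IZR (z * z)) by (rewrite mult_IZR; ring).
  apply IZR_le. nia.
Qed.

Lemma Rabs_IZR_le_sqr z : Rabs (IZR z) <= IZR z ^ 2.
Proof.
  replace (IZR z ^ 2) with (IZR (z * z)) by (rewrite mult_IZR; ring).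
  rewrite <- abs_IZR. apply IZR_le. nia.
Qed.

Definition freq_sqnorm d (k : nat -> Z) := sum_upto d (fun i => IZR (k i) ^ 2).

Lemma freq_sqnorm_nonneg d k : 0 <= freq_sqnorm d k.
Proof. apply sum_upto_nonneg. intros; apply pow2_ge_0. Qed.

Lemma Rabs_sqr_diff_le a b : 1 <= a <= 2 -> 1 <= b <= 2 ->
  2 * Rabs (a - b) <= Rabs (a ^ 2 - b ^ 2) <= 4 * Rabs (a - b).
Proof.
  intros Ha Hb. replace (a ^ 2 - b ^ 2) with ((a - b) * (a + b)) by ring.
  rewrite Rabs_mult, (Rabs_right (a + b)) by lra. pose proof (Rabs_pos (a - b)). nra.
Qed.

(* Along the direction i0 with k i0 <> 0 the symbol is monotone with slope >= 2 k_i0^2 >= 2,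
   while moving the other coordinates by h changes it by at most 4 h |k|^2. *)
Lemma resonant_coord_close d m gam k i0 h nu nu' : (i0 < d)%nat -> k i0 <> 0%Z -> 0 <= h ->
  resonant d m gam k nu -> resonant d m gam k nu' ->
  (forall i, (i < d)%nat -> i <> i0 -> Rabs (nu i - nu' i) <= h) ->
  Rabs (nu i0 - nu' i0) <= gam + 2 * h * freq_sqnorm d k.
Proof.
  intros Hi0 Hk Hh [Hc Hr] [Hc' Hr'] Hclose.
  set (D := fun i => IZR (k i) ^ 2 * (nu i ^ 2 - nu' i ^ 2)).
  assert (E : helm_symbol d nu k - helm_symbol d nu' k
              = D i0 + sum_upto d (fun i => if Nat.eqb i i0 then 0 else D i)).
  { rewrite <- (sum_upto_split d D i0 Hi0). unfold helm_symbol. rewrite <- sum_upto_minus.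
    apply sum_upto_ext. intros; unfold D; ring. }
  assert (Hrest : Rabs (sum_upto d (fun i => if Nat.eqb i i0 then 0 else D i))
                  <= 4 * h * freq_sqnorm d k).
  { unfold freq_sqnorm. rewrite <- sum_upto_scal. apply sum_upto_abs_le. intros i Hi.
    pose proof (pow2_ge_0 (IZR (k i))).
    destruct (Nat.eqb_spec i i0); [rewrite Rabs_R0; nra|].
    unfold D. rewrite Rabs_mult, (Rabs_right (IZR (k i) ^ 2)) by lra.
    pose proof (Rabs_sqr_diff_le (nu i) (nu' i) (Hc i Hi) (Hc' i Hi)).
    pose proof (Hclose i Hi n).
    replace (4 * h * IZR (k i) ^ 2) with (IZR (k i) ^ 2 * (4 * h)) by ring.
    apply Rmult_le_compat_l; lra. }
  assert (HD : Rabs (D i0) < 2 * gam + 4 * h * freq_sqnorm d k).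
  { replace (D i0) with ((helm_symbol d nu k - m) - (helm_symbol d nu' k - m)
                        - sum_upto d (fun i => if Nat.eqb i i0 then 0 else D i)) by lra.
    pose proof (Rabs_triang ((helm_symbol d nu k - m) - (helm_symbol d nu' k - m))
                            (- sum_upto d (fun i => if Nat.eqb i i0 then 0 else D i))).
    pose proof (Rabs_triang (helm_symbol d nu k - m) (- (helm_symbol d nu' k - m))).
    unfold Rminus in *. rewrite !Rabs_Ropp in *. lra. }
  unfold D in HD. rewrite Rabs_mult, (Rabs_right (IZR (k i0) ^ 2)) in HD
    by (pose proof (IZR_sqr_ge_1 _ Hk); lra).
  pose proof (IZR_sqr_ge_1 _ Hk).
  pose proof (Rabs_sqr_diff_le (nu i0) (nu' i0) (Hc i0 Hi0) (Hc' i0 Hi0)).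
  pose proof (Rabs_pos (nu i0 - nu' i0)). pose proof (Rabs_pos (nu i0 ^ 2 - nu' i0 ^ 2)). nra.
Qed.

Lemma cube_in_grid_cell d i0 N nu : in_cube d nu ->
  exists c, In c (grid (fun i => if Nat.eqb i i0 then 1%nat else S N) d) /\
    forall i, (i < d)%nat -> i <> i0 ->
      1 + INR (c i) / INR (S N) <= nu i <= 1 + (INR (c i) + 1) / INR (S N).
Proof.
  intros Hcube. assert (HN : 0 < INR (S N)) by (apply lt_0_INR; lia).
  destruct (finite_choice (fun i x => (x < (if Nat.eqb i i0 then 1 else S N))%nat /\
      (i <> i0 -> INR x <= (nu i - 1) * INR (S N) <= INR x + 1)) d) as [c Hc].
  { intros i Hi. destruct (Nat.eqb_spec i i0); [exists 0%nat; split; [lia | contradiction]|].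
    specialize (Hcube i Hi).
    destruct (floor_in_range N ((nu i - 1) * INR (S N))) as [x [Hx1 Hx2]]; [split; nra|].
    exists x. auto. }
  destruct (in_grid (fun i => if Nat.eqb i i0 then 1%nat else S N) d c) as [c' [Hin Heq]].
  { intros i Hi; apply Hc; auto. }
  exists c'. split; [exact Hin|]. intros i Hi Hii. rewrite Heq by auto.
  destruct (Hc i Hi) as [_ Hx]. specialize (Hx Hii).
  split; apply (Rmult_le_reg_r (INR (S N))); auto; unfold Rdiv;
    rewrite Rmult_plus_distr_r, Rmult_assoc, Rinv_l; lra.
Qed.

Lemma resonant_cell_covered d m gam k i0 h (lo hi : pt) :
  (i0 < d)%nat -> k i0 <> 0%Z -> 0 < gam -> 0 <= h ->
  (forall i, (i < d)%nat -> i <> i0 -> lo i <= hi i <= lo i + h) ->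
  box_covered d
    (fun nu => resonant d m gam k nu /\ forall i, (i < d)%nat -> i <> i0 -> lo i <= nu i <= hi i)
    (prod_upto d (fun i => if Nat.eqb i i0 then 2 * (gam + 2 * h * freq_sqnorm d k)
                           else hi i - lo i)).
Proof.
  intros Hi0 Hk Hg Hh Hcell.
  set (w := gam + 2 * h * freq_sqnorm d k).
  assert (Hw : 0 <= w)
    by (pose proof (Rmult_le_pos h _ Hh (freq_sqnorm_nonneg d k)); unfold w; lra).
  destruct (classic (exists nu0, resonant d m gam k nu0 /\
                       forall i, (i < d)%nat -> i <> i0 -> lo i <= nu0 i <= hi i))
    as [[nu0 [Hr0 Hc0]]|Hnone].
  2:{ apply (box_covered_weaken _ _ (fun _ => False) 0); [|apply box_covered_empty; auto|].
      - intros nu Hnu. apply Hnone. exists nu. exact Hnu.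
      - apply prod_upto_nonneg. intros i Hi.
        destruct (Nat.eqb_spec i i0); [lra | pose proof (Hcell i Hi n); lra]. }
  (* all resonant points of the cell lie within w of nu0 in the direction i0 *)
  set (bx := ((fun i => if Nat.eqb i i0 then nu0 i0 - w else lo i),
              (fun i => if Nat.eqb i i0 then nu0 i0 + w else hi i))).
  replace (prod_upto d _) with (box_volume d bx).
  2:{ apply prod_upto_ext. intros i _. unfold bx; cbn [fst snd].
      destruct (Nat.eqb i i0); [fold w; ring | reflexivity]. }
  apply box_covered_single.
  - intros i Hi. unfold bx; cbn [fst snd].
    destruct (Nat.eqb_spec i i0); [lra | pose proof (Hcell i Hi n); lra].
  - intros nu [Hr Hc] i Hi. unfold bx; cbn [fst snd].
    destruct (Nat.eqb_spec i i0) as [->|Hne]; [|apply Hc; auto].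
    assert (Habs : Rabs (nu i0 - nu0 i0) <= w).
    { apply (resonant_coord_close d m gam k i0 h); auto.
      intros j Hj Hji. specialize (Hc j Hj Hji). specialize (Hc0 j Hj Hji).
      pose proof (Hcell j Hj Hji). apply Rabs_le. lra. }
    apply Rabs_le_between' in Habs. lra.
Qed.

Lemma resonant_mode_covered d m gam k i0 : (i0 < d)%nat -> k i0 <> 0%Z -> 0 < gam ->
  box_covered d (resonant d m gam k) (3 * gam).
Proof.
  intros Hi0 Hk Hg.
  set (SS := freq_sqnorm d k). pose proof (freq_sqnorm_nonneg d k) as HSS.
  destruct (nat_above (4 * SS / gam)) as [N HN].
  assert (HN' : 0 < INR (S N)) by (apply lt_0_INR; lia).
  set (h := 1 / INR (S N)).
  assert (Hh : 0 < h) by (apply Rdiv_lt_0_compat; lra).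
  set (r := fun i => if Nat.eqb i i0 then 1%nat else S N).
  set (lo := fun (c : nat -> nat) i => 1 + INR (c i) / INR (S N)).
  set (hi := fun (c : nat -> nat) i => 1 + (INR (c i) + 1) / INR (S N)).
  set (V := prod_upto d (fun i => if Nat.eqb i i0 then 2 * (gam + 2 * h * SS) else h)).
  assert (Hcell : forall c, box_covered d (fun nu => resonant d m gam k nu /\
      forall i, (i < d)%nat -> i <> i0 -> lo c i <= nu i <= hi c i) V).
  { intros c. replace V with (prod_upto d (fun i => if Nat.eqb i i0
        then 2 * (gam + 2 * h * freq_sqnorm d k) else hi c i - lo c i)).
    - apply resonant_cell_covered; auto; [lra|].
      intros i _ _. unfold lo, hi, h. unfold Rdiv. rewrite Rmult_plus_distr_r.
      pose proof (Rinv_0_lt_compat _ HN'). lra.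
    - apply prod_upto_ext. intros i _. destruct (Nat.eqb i i0); [reflexivity|].
      unfold lo, hi, h. field. lra. }
  assert (HV : INR (length (grid r d)) * V <= 3 * gam).
  { rewrite length_grid. unfold V. rewrite <- prod_upto_mult.
    rewrite (prod_upto_ext _ _ (fun i => if Nat.eqb i i0 then 2 * (gam + 2 * h * SS) else 1)).
    - rewrite prod_upto_single by auto.
      enough (4 * SS * h <= gam) by lra.
      unfold h. apply (Rmult_le_reg_r (INR (S N))); auto. unfold Rdiv.
      rewrite Rmult_1_l, Rmult_assoc, Rinv_l by lra.
      assert (INR N <= INR (S N)) by (apply le_INR; lia).
      assert (4 * SS / gam * gam = 4 * SS) by (field; lra). nra.
    - intros i _. unfold r. destruct (Nat.eqb i i0); [simpl; ring|]. unfold h. field. lra. }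
  apply (box_covered_weaken _ _ (fun nu => exists c, In c (grid r d) /\ (resonant d m gam k nu /\
           forall i, (i < d)%nat -> i <> i0 -> lo c i <= nu i <= hi c i))
           (INR (length (grid r d)) * V)); [|apply box_covered_list_union; auto | exact HV].
  intros nu Hr. destruct (cube_in_grid_cell d i0 N nu (proj1 Hr)) as [c [Hin Hc]]. eauto.
Qed.

Lemma resonant_freq_covered d m gam k : 0 < gam <= m ->
  box_covered d (resonant d m gam k) (3 * gam).
Proof.
  intros Hg. destruct (classic (exists i0, (i0 < d)%nat /\ k i0 <> 0%Z)) as [[i0 [Hi0 Hk]]|Hk0].
  - apply (resonant_mode_covered d m gam k i0); auto; lra.
  - apply (box_covered_weaken _ _ (fun _ => False) 0); [|apply box_covered_empty; auto | lra].
    intros nu [_ Hr].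
    assert (H0 : helm_symbol d nu k = sum_upto d (fun i => 0 * IZR (k i))).
    { apply sum_upto_ext. intros i Hi.
      destruct (Z.eq_dec (k i) 0) as [->|Hne]; [simpl; ring | exfalso; eauto]. }
    rewrite H0, sum_upto_scal, Rmult_0_l, Rminus_0_l, Rabs_Ropp, Rabs_right in Hr by lra. lra.
Qed.

(* For nu in [1,2]^d, |k_i| <= nu_i^2 k_i^2 <= helm_symbol d nu k < m + gam. *)
Lemma resonant_freq_lt d m gam k nu i : gam <= 1 -> resonant d m gam k nu -> (i < d)%nat ->
  Rabs (IZR (k i)) < m + 1.
Proof.
  intros Hg1 [Hc Hr] Hi.
  assert (Rabs (IZR (k i)) <= helm_symbol d nu k).
  { eapply Rle_trans; [apply Rabs_IZR_le_sqr|].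
    eapply Rle_trans; [|apply (sum_upto_single_le d (fun i => nu i ^ 2 * IZR (k i) ^ 2) i Hi)].
    - pose proof (Hc i Hi). assert (1 <= nu i ^ 2) by nra. pose proof (pow2_ge_0 (IZR (k i))). nra.
    - intros j Hj. apply Rmult_le_pos; apply pow2_ge_0. }
  apply Rabs_def2 in Hr. lra.
Qed.

Lemma resonant_set_covered d m delta : 0 < m -> 0 < delta ->
  exists gam, 0 < gam /\ box_covered d (fun nu => exists k, resonant d m gam k nu) delta.
Proof.
  intros Hm Hdelta. destruct (nat_above (m + 1)) as [K HK].
  set (KL := map (fun c i => (Z.of_nat (c i) - Z.of_nat K)%Z) (grid (fun _ => (2 * K + 1)%nat) d)).
  set (NK := INR (length KL)). assert (HNK : 0 <= NK) by apply pos_INR.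
  set (gam := Rmin m (Rmin 1 (delta / (3 * (NK + 1))))).
  assert (Hg0 : 0 < delta / (3 * (NK + 1))) by (apply Rdiv_lt_0_compat; lra).
  assert (Hgm : gam <= m) by apply Rmin_l.
  assert (Hg1 : gam <= 1) by (eapply Rle_trans; [apply Rmin_r | apply Rmin_l]).
  assert (Hgd : gam <= delta / (3 * (NK + 1))) by (eapply Rle_trans; [apply Rmin_r | apply Rmin_r]).
  assert (Hg : 0 < gam) by (apply Rmin_pos; [|apply Rmin_pos]; lra).
  exists gam. split; [exact Hg|].
  apply (box_covered_weaken _ _ (fun nu => exists k, In k KL /\ resonant d m gam k nu)
                             (NK * (3 * gam))).
  - intros nu [k Hr].
    assert (Hki : forall i, (i < d)%nat -> (Z.abs (k i) < Z.of_nat K)%Z).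
    { intros i Hi. apply lt_IZR. rewrite abs_IZR, <- INR_IZR_INZ.
      pose proof (resonant_freq_lt d m gam k nu i Hg1 Hr Hi). lra. }
    destruct (in_grid (fun _ => (2 * K + 1)%nat) d (fun i => Z.to_nat (k i + Z.of_nat K)))
      as [c [Hc Hceq]]; [intros i Hi; specialize (Hki i Hi); lia|].
    exists (fun i => (Z.of_nat (c i) - Z.of_nat K)%Z).
    split; [apply (in_map (fun c i => (Z.of_nat (c i) - Z.of_nat K)%Z)), Hc|].
    destruct Hr as [Hcube Hr]. split; [exact Hcube|].
    rewrite <- (helm_symbol_ext d nu k); auto.
    intros i Hi. rewrite Hceq by auto. specialize (Hki i Hi). lia.
  - apply box_covered_list_union. intros k _. apply resonant_freq_covered. lra.
  - assert (NK * (3 * gam) <= NK * (3 * (delta / (3 * (NK + 1)))))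
      by (apply Rmult_le_compat_l; lra).
    assert (NK * (3 * (delta / (3 * (NK + 1)))) = delta - delta / (NK + 1)) by (field; lra).
    assert (0 < delta / (NK + 1)) by (apply Rdiv_lt_0_compat; lra).
    lra.
Qed.

Lemma Rabs_mult_le_half eps gam X Y : 0 < gam -> 0 <= X <= Y ->
  0 <= eps <= gam / (2 * (Y + 1)) -> Rabs eps * X <= gam / 2.
Proof.
  intros Hg HX Heps. rewrite Rabs_right by lra.
  assert (eps * (Y + 1) <= gam / 2).
  { replace (gam / 2) with (gam / (2 * (Y + 1)) * (Y + 1)) by (field; lra).
    apply Rmult_le_compat_r; lra. }
  nra.
Qed.

Theorem theorem1p1 (d p : nat) (m : R) (lf lg : list ((nat -> Z) * R * R)) :
  (1 <= d)%nat -> (2 <= p)%nat -> 0 < m ->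
  (exists x, trig_poly d lg x <> 0) ->
  forall delta, 0 < delta ->
  exists eps0, 0 < eps0 /\
  forall eps, 0 <= eps <= eps0 ->
  exists Omega : pt -> Prop,
    (forall nu, Omega nu -> in_cube d nu) /\
    outer_measure_le d (fun nu => in_cube d nu /\ ~ Omega nu) delta /\
    forall nu, Omega nu ->
      exists u : pt -> R,
        torus_fun d u /\ real_analytic d u /\
        solves d nu m eps (trig_poly d lf) (trig_poly d lg) p u.
Proof.
  (* g <> 0 only serves to make the solutions non-trivial; the construction does not use it. *)
  intros Hd Hp Hm _ delta Hdelta.
  destruct (resonant_set_covered d m delta Hm Hdelta) as [gam [Hg Hcov]].
  set (NF := fp_norm d (fp_of_trig lf)). set (NG := fp_norm d (fp_of_trig lg)).
  assert (HNF : 0 <= NF) by apply fp_norm_nonneg. assert (HNG : 0 <= NG) by apply fp_norm_nonneg.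
  assert (HP : 0 <= INR p) by apply pos_INR.
  exists (gam / (2 * (NG + NF * INR p + 1))). split; [apply Rdiv_lt_0_compat; nra|].
  intros eps Heps.
  exists (fun nu => in_cube d nu /\ forall k, gam <= Rabs (helm_symbol d nu k - m)).
  split; [tauto|]. split.
  - apply outer_measure_le_of_box_covered; [exact Hd|].
    refine (box_covered_weaken _ _ _ _ _ _ Hcov (Rle_refl delta)).
    intros nu [Hc Hno]. apply NNPP. intros Hnone. apply Hno. split; [exact Hc|].
    intros k. apply Rnot_lt_le. intros Hlt. apply Hnone. exists k. split; auto.
  - intros nu [_ Hgap]. apply (nonresonant_solution d p nu m eps gam); auto; [lia| |].
    + apply (Rabs_mult_le_half eps gam NG (NG + NF * INR p)); auto. nra.
    + rewrite Rmult_assoc.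
      apply (Rabs_mult_le_half eps gam (NF * INR p) (NG + NF * INR p)); auto. nra.
Qed.
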